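(* Let $\sum_{\mathbf n\in\mathbb N_0^d}a_{\mathbf n}W_{\mathbf n}$ be a $d$-fold Walsh series and $\tau$ the quasimeasure generated by it. If $\mathbf g\notin\operatorname{supp}\tau$, then there is $w=w(\mathbf g)\in\mathbb N_0$ such that $S_{2^w\mathbf M}(\mathbf g)=0$ for all $\mathbf M\in\mathbb N^d$. As $w$ one may take the smallest rank of a dyadic cube $\Delta^{(w)}\ni\mathbf g$ such that $\tau(\Delta)=0$ for every dyadic cube $\Delta\subset\Delta^{(w)}$.
   Context: Fix $d\ge2$. $\mathbb G$ is the dyadic group: sequences $g=(g_k)_{k\ge0}$, $g_k\in\{0,1\}$, coordinatewise addition mod 2, product topology; $\mathbb G^d$ its $d$-th power. For $n\in\mathbb N_0$, $n=\sum_kn_k2^k$, $n_k\in\{0,1\}$. Dyadic interval of rank $k$: $\Delta^{(k)}_m=\{g: g_t=m_{k-1-t},\ 0\le t<k\}$; dyadic cube of rank $k$: $\Delta^{(k)}_{\mathbf m}=\prod_l\Delta^{(k)}_{m^l}$. Vector order coordinatewise, $\mathbf 1=(1,\dots,1)$. Walsh functions $W_n(g)=\prod_k(-1)^{g_kn_k}$, $W_{\mathbf n}(\mathbf g)=\prod_lW_{n^l}(g^l)$. Partial sums $S_{\mathbf N}(\mathbf g)=\sum_{\mathbf n<\mathbf N}a_{\mathbf n}W_{\mathbf n}(\mathbf g)$. Quasimeasure: $\tau$ on dyadic cubes with $\tau(\Delta^{(k)}_{\mathbf m})=\sum_{\boldsymbol\sigma\in\{0,1\}^d}\tau(\Delta^{(k+1)}_{2\mathbf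 m+\boldsymbol\sigma})$; generated by the series via $\tau(\Delta^{(k)})=2^{-kd}S_{2^k\mathbf 1}(\mathbf g)$, $\mathbf g\in\Delta^{(k)}$. The support $\operatorname{supp}\tau$ is $\mathbb G^d\setminus U$, where $U$ is the union of all dyadic cubes $\Delta_0$ such that $\tau(\Delta)=0$ for every dyadic cube $\Delta\subset\Delta_0$. *)

From HB Require Import structures.
From mathcomp Require Import all_boot all_order all_algebra.
From mathcomp Require Import reals.
Set Implicit Arguments. Unset Strict Implicit. Unset Printing Implicit Defensive.
Import Order.TTheory GRing.Theory Num.Theory.
Local Open Scope ring_scope.

(* The dyadic group G: sequences (g_k)_{k>=0} of bits. *)
Definition dyad := nat -> bool.
(* G^d : d-tuples of dyadic sequences; g l k is the k-th bit of the l-th coordinate. *)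
Definition dyadv (d : nat) := 'I_d -> dyad.

Definition nbit (n k : nat) : bool := odd (n %/ 2 ^ k).

(* Walsh function W_n(g) = prod_k (-1)^(g_k n_k); digits n_k vanish for k >= n. *)
Definition walsh {R : realType} (n : nat) (g : dyad) : R :=
  \prod_(k < n) (if nbit n k && g k then -1 else 1).

Definition walshv {R : realType} (d : nat) (n : 'I_d -> nat) (g : dyadv d) : R :=
  \prod_(l < d) walsh (n l) (g l).

Definition psum {R : realType} (d : nat) (a : ('I_d -> nat) -> R)
    (N : 'I_d -> nat) (g : dyadv d) : R :=
  \sum_(n : {ffun 'I_d -> 'I_(\max_(l < d) N l)%N} | [forall l, (n l < N l)%N])
     a (fun l => nat_of_ord (n l)) * walshv (fun l => nat_of_ord (n l)) g.

(* The dyadic cube of rank k containing h: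
   { g | g^l_t = h^l_t for all l and all t < k }.  Every dyadic cube
   Delta^(k)_m is of this form (for any h in it). *)
Definition cube (d : nat) (k : nat) (h : dyadv d) : dyadv d -> Prop :=
  fun g => forall (l : 'I_d) (t : nat), (t < k)%N -> g l t = h l t.

(* Quasimeasure generated by the series:
   tau(Delta^(k)) = 2^(-kd) S_{2^k 1}(h) for h in Delta^(k). *)
Definition tau {R : realType} (d : nat) (a : ('I_d -> nat) -> R)
    (k : nat) (h : dyadv d) : R :=
  ((2 ^ (k * d))%:R)^-1 * psum a (fun _ => 2 ^ k)%N h.

Definition tau_null_cube {R : realType} (d : nat) (a : ('I_d -> nat) -> R)
    (k : nat) (h : dyadv d) : Prop :=
  forall (k' : nat) (h' : dyadv d),
    (forall g, cube k' h' g -> cube k h g) -> tau a k' h' = 0.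

(* g lies in the support of tau iff it is not in the union U of all dyadic
   cubes Delta_0 on whose subcubes tau vanishes. *)
Definition in_supp {R : realType} (d : nat) (a : ('I_d -> nat) -> R)
    (g : dyadv d) : Prop :=
  ~ (exists (k : nat) (h : dyadv d), cube k h g /\ tau_null_cube a k h).

Definition null_rank {R : realType} (d : nat) (a : ('I_d -> nat) -> R)
    (g : dyadv d) (w : nat) : Prop :=
  exists h : dyadv d, cube w h g /\ tau_null_cube a w h.

From HB Require Import structures.
From mathcomp Require Import all_boot all_order all_algebra.
From mathcomp Require Import reals.
From mathcomp Require Import ring.
From Stdlib Require Import Classical FunctionalExtensionality.
Set Implicit Arguments. Unset Strict Implicit. Unset Printing Implicit Defensive.
Import Order.TTheory GRing.Theory Num.Theory.
Local Open Scope ring_scope.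

(* Let [Delta^(w)] be a cube through [g] on all of whose subcubes [tau]
   vanishes, so that [S_(2^K 1)] vanishes on [Delta^(w)] for every [K >= w].
   By orthogonality of the Walsh functions on the [2^(Kd)] cubes of rank [K],
   for [K] large [S_(2^w M)(g)] is the average of [S_(2^K 1)] against the
   Dirichlet kernel [D_(2^w M)(. + g)], and this kernel is supported in
   [Delta^(w)] because [D_(2^w) = 2^w 1_(Delta^(w))]. Hence every term of the
   average vanishes. Any rank of such a cube works, minimal or not. *)

Lemma nbit_small (n k : nat) : (n < 2 ^ k)%N -> nbit n k = false.
Proof. by move=> h; rewrite /nbit divn_small. Qed.

Lemma nbit0 (n : nat) : nbit n 0 = odd n.
Proof. by rewrite /nbit expn0 divn1. Qed.

Lemma nbitS (n t : nat) : nbit n t.+1 = nbit n./2 t.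
Proof. by rewrite /nbit expnS divnMA divn2. Qed.

Lemma nbitD (n w t : nat) : nbit n (w + t) = nbit (n %/ 2 ^ w) t.
Proof. by rewrite /nbit expnD divnMA. Qed.

Lemma nbit_inj (L a b : nat) : (a < 2 ^ L)%N -> (b < 2 ^ L)%N ->
  (forall t, (t < L)%N -> nbit a t = nbit b t) -> a = b.
Proof.
elim: L a b => [|L IH] a b ha hb eq_bits.
  by move: ha hb; rewrite expn0 !ltnS !leqn0 => /eqP -> /eqP ->.
have eq_odd : odd a = odd b by rewrite -!nbit0; apply: eq_bits.
have eq_half : a./2 = b./2.
  apply: IH; try by rewrite -divn2 ltn_divLR // -expnSr.
  by move=> t ht; rewrite -!nbitS; apply: eq_bits.
by rewrite -[a]odd_double_half -[b]odd_double_half eq_odd eq_half.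
Qed.

Definition sign_bit (R : pzRingType) (b c : bool) : R := if b && c then -1 else 1.

Lemma prod_sign_nbit_widen (R : pzRingType) (n L L' : nat) (g : dyad) :
  (L <= L')%N -> (n < 2 ^ L)%N ->
  \prod_(k < L) sign_bit R (nbit n k) (g k) =
  \prod_(k < L') sign_bit R (nbit n k) (g k).
Proof.
move=> le_LL' lt_n.
rewrite (big_ord_widen L' (fun k => sign_bit R (nbit n k) (g k)) le_LL') big_mkcond.
apply: eq_bigr => k _; case: ltnP => le_Lk //.
by rewrite nbit_small // (leq_trans lt_n) // leq_exp2l.
Qed.

Lemma walshE (R : realType) (K n : nat) (g : dyad) : (n < 2 ^ K)%N ->
  walsh n g = \prod_(k < K) sign_bit R (nbit n k) (g k).
Proof.
move=> lt_n; have lt_nn : (n < 2 ^ n)%N by apply: ltn_expl.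
rewrite /walsh (@prod_sign_nbit_widen R n n (maxn n K)) ?leq_maxl //.
by rewrite -(@prod_sign_nbit_widen R n K (maxn n K)) ?leq_maxr.
Qed.

Definition dyad_of_bits (K : nat) (y : {ffun 'I_K -> bool}) : dyad :=
  fun t => if insub t is Some i then y i else false.

Lemma dyad_of_bitsE (K : nat) (y : {ffun 'I_K -> bool}) (i : 'I_K) :
  dyad_of_bits y i = y i.
Proof. by rewrite /dyad_of_bits valK. Qed.

Definition dyadv_of_bits (d K : nat) (x : {ffun 'I_d -> {ffun 'I_K -> bool}}) : dyadv d :=
  fun l => dyad_of_bits (x l).

Lemma prod_indicatorM (R : comPzSemiRingType) (I : finType) (P : pred I) (F : I -> R) :
  \prod_i ((P i)%:R * F i) = [forall i, P i]%:R * \prod_i F i.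
Proof.
rewrite big_split /=; congr (_ * _).
case: (boolP [forall i, P i]) => [/forallP allP | /forallPn [i notPi]].
  by apply: big1 => i _; rewrite allP.
by rewrite (bigD1 i) //= (negbTE notPi) mul0r.
Qed.

Lemma forall_nbit_shift (w K n j : nat) :
  (n < 2 ^ K)%N -> (w <= K)%N -> (j < 2 ^ (K - w))%N ->
  [forall k : 'I_K, (k < w)%N || (nbit n k == nbit j (k - w))] = (n %/ 2 ^ w == j)%N.
Proof.
move=> lt_n le_wK lt_j; apply/forallP/eqP => [eq_bits | <- k].
  apply: (@nbit_inj (K - w)) => //.
    by rewrite ltn_divLR ?expn_gt0 // -expnD subnK.
  move=> t lt_t; have lt_wt : (w + t < K)%N by rewrite -ltn_subRL.
  have := eq_bits (Ordinal lt_wt); rewrite /= ltnNge leq_addr addKn => /eqP <-.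
  by rewrite nbitD.
by case: (ltnP k w) => //= le_wk; rewrite -nbitD subnKC.
Qed.

Section Dirichlet.

Variable R : realType.

(* For [2^w m <= 2^K], [dirichlet1 w m gl y] is [2^-K D_(2^w m)(y + gl)] with
   [D_N = sum_(n < N) W_n], written as a product over the [K] bits of [y] using
   [D_(2^w m)(z) = 2^w 1_(z_0 = ... = z_(w-1) = 0) sum_(j < m) W_j(z_w, z_(w+1), ...)];
   the product form makes its Walsh coefficients computable bit by bit. *)
Definition dirichlet_factor (w j : nat) (gl : dyad) (k : nat) (c : bool) : R :=
  if (k < w)%N then (c == gl k)%:R
  else 2^-1 * (sign_bit R (nbit j (k - w)) c * sign_bit R (nbit j (k - w)) (gl k)).

Definition dirichlet_block (w j : nat) (gl : dyad) (K : nat) (y : {ffun 'I_K -> bool}) : R :=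
  \prod_(k < K) dirichlet_factor w j gl k (y k).

Definition dirichlet1 (w m : nat) (gl : dyad) (K : nat) (y : {ffun 'I_K -> bool}) : R :=
  \sum_(j < m) dirichlet_block w j gl y.

Definition dirichlet (d w K : nat) (M : 'I_d -> nat) (g : dyadv d)
    (x : {ffun 'I_d -> {ffun 'I_K -> bool}}) : R :=
  \prod_(l < d) dirichlet1 w (M l) (g l) (x l).

Lemma dirichlet_factor_sign (w j : nat) (gl : dyad) (k : nat) (b : bool) :
  \sum_(c : bool) dirichlet_factor w j gl k c * sign_bit R b c =
  ((k < w)%N || (b == nbit j (k - w)))%:R * sign_bit R b (gl k).
Proof.
rewrite big_bool /dirichlet_factor /sign_bit.
by case: (k < w)%N; case: b; case: (gl k); case: (nbit j (k - w)) => /=; field.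
Qed.

Lemma dirichlet_block_walsh (w j K n : nat) (gl : dyad) :
  (n < 2 ^ K)%N -> (w <= K)%N -> (j < 2 ^ (K - w))%N ->
  \sum_(y : {ffun 'I_K -> bool}) dirichlet_block w j gl y * walsh n (dyad_of_bits y) =
  (n %/ 2 ^ w == j)%N%:R * walsh n gl.
Proof.
move=> lt_n le_wK lt_j.
transitivity (\prod_(k < K) \sum_(c : bool)
                dirichlet_factor w j gl k c * sign_bit R (nbit n k) c).
  rewrite bigA_distr_bigA; apply: eq_bigr => y _.
  rewrite (walshE R _ lt_n) /dirichlet_block -big_split /=.
  by apply: eq_bigr => k _; rewrite dyad_of_bitsE.
under eq_bigr do rewrite dirichlet_factor_sign.
by rewrite prod_indicatorM forall_nbit_shift // -(walshE R _ lt_n).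
Qed.

Lemma dirichlet1_walsh (w m K n : nat) (gl : dyad) :
  (n < 2 ^ K)%N -> (w <= K)%N -> (2 ^ w * m <= 2 ^ K)%N ->
  \sum_(y : {ffun 'I_K -> bool}) dirichlet1 w m gl y * walsh n (dyad_of_bits y) =
  (n < 2 ^ w * m)%N%:R * walsh n gl.
Proof.
move=> lt_n le_wK le_m.
have le_m' : (m <= 2 ^ (K - w))%N.
  by rewrite -(leq_pmul2l (expn_gt0 2 w)) -expnD subnKC.
under eq_bigr do rewrite /dirichlet1 mulr_suml.
rewrite exchange_big /=.
under eq_bigr => j _ do rewrite dirichlet_block_walsh // ?(leq_trans (ltn_ord j)) //.
rewrite -mulr_suml -natr_sum; congr (_%:R * _).
rewrite mulnC -ltn_divLR ?expn_gt0 //.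
case: ltnP => [lt_q | le_q].
  rewrite (bigD1 (Ordinal lt_q)) //= eqxx big1 // => j ne_j.
  by move: ne_j; rewrite -val_eqE /= eq_sym => /negbTE ->.
apply: big1 => j _; rewrite gtn_eqF //; exact: leq_trans (ltn_ord j) le_q.
Qed.

Lemma dirichlet1_eq0 (w m K : nat) (gl : dyad) (y : {ffun 'I_K -> bool}) (t : 'I_w) :
  (w <= K)%N -> dyad_of_bits y t != gl t -> dirichlet1 w m gl y = 0.
Proof.
move=> le_wK ne_t; apply: big1 => j _.
rewrite /dirichlet_block (bigD1 (widen_ord le_wK t)) //= /dirichlet_factor /= ltn_ord.
by rewrite -(dyad_of_bitsE y (widen_ord le_wK t)) (negbTE ne_t) mul0r.
Qed.

Lemma dirichlet_eq0 (d w K : nat) (M : 'I_d -> nat) (g : dyadv d)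
    (x : {ffun 'I_d -> {ffun 'I_K -> bool}}) (l : 'I_d) (t : 'I_w) :
  (w <= K)%N -> dyadv_of_bits x l t != g l t -> dirichlet w M g x = 0.
Proof.
by move=> le_wK ne_t; rewrite /dirichlet (bigD1 l) //= (dirichlet1_eq0 _ le_wK ne_t) mul0r.
Qed.

Lemma dirichlet_walshv (d w K : nat) (M : 'I_d -> nat) (g : dyadv d) (n : 'I_d -> nat) :
  (forall l, n l < 2 ^ K)%N -> (w <= K)%N -> (forall l, 2 ^ w * M l <= 2 ^ K)%N ->
  \sum_(x : {ffun 'I_d -> {ffun 'I_K -> bool}})
     dirichlet w M g x * walshv n (dyadv_of_bits x) =
  [forall l, (n l < 2 ^ w * M l)%N]%:R * walshv n g.
Proof.
move=> lt_n le_wK le_M.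
transitivity (\prod_(l < d) \sum_(y : {ffun 'I_K -> bool})
                 dirichlet1 w (M l) (g l) y * walsh (n l) (dyad_of_bits y)).
  by rewrite bigA_distr_bigA; apply: eq_bigr => x _; rewrite -big_split.
under eq_bigr do rewrite dirichlet1_walsh //.
exact: prod_indicatorM.
Qed.

End Dirichlet.

Lemma sum_ffun_ord_widen (R : nmodType) (d B B' : nat) (N : 'I_d -> nat)
    (F : ('I_d -> nat) -> R) :
  (0 < B)%N -> (B <= B')%N -> (forall l, N l <= B)%N ->
  \sum_(n : {ffun 'I_d -> 'I_B'} | [forall l, (n l < N l)%N]) F (fun l => val (n l)) =
  \sum_(n : {ffun 'I_d -> 'I_B} | [forall l, (n l < N l)%N]) F (fun l => val (n l)).
Proof.
move=> gt0_B le_BB' le_N.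
pose widen (n : {ffun 'I_d -> 'I_B}) : {ffun 'I_d -> 'I_B'} :=
  [ffun l => widen_ord le_BB' (n l)].
pose narrow (n : {ffun 'I_d -> 'I_B'}) : {ffun 'I_d -> 'I_B} :=
  [ffun l => insubd (Ordinal gt0_B) (val (n l))].
have narrowK : cancel widen narrow.
  by move=> n; apply/ffunP => l; apply: val_inj; rewrite !ffunE val_insubd /= ltn_ord.
rewrite (reindex_onto widen narrow) /=; last first.
  move=> n /forallP lt_n; apply/ffunP => l; apply: val_inj.
  by rewrite !ffunE /= val_insubd (leq_trans (lt_n l) (le_N l)).
apply: eq_big => [n | n _].
  by rewrite narrowK eqxx andbT; apply: eq_forallb => l; rewrite ffunE.
by congr F; apply: functional_extensionality => l; rewrite ffunE.
Qed.

Lemma psumE (R : realType) (d B : nat) (a : ('I_d -> nat) -> R) (N : 'I_d -> nat)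
    (g : dyadv d) :
  (0 < \max_(l < d) N l)%N -> (forall l, N l <= B)%N ->
  psum a N g =
  \sum_(n : {ffun 'I_d -> 'I_B} | [forall l, (n l < N l)%N])
     a (fun l => val (n l)) * walshv (fun l => val (n l)) g.
Proof.
move=> gt0_N le_N.
rewrite /psum -(sum_ffun_ord_widen (fun n => a n * walshv n g) gt0_N (B' := B)) //.
- exact/bigmax_leqP.
- by move=> l; apply: leq_bigmax.
Qed.

Lemma psum_dirichlet_average (R : realType) (d w K : nat) (a : ('I_d -> nat) -> R)
    (M : 'I_d -> nat) (g : dyadv d) :
  (0 < d)%N -> (forall l, 0 < M l)%N -> (w <= K)%N -> (forall l, 2 ^ w * M l <= 2 ^ K)%N ->
  psum a (fun l => 2 ^ w * M l)%N g =
  \sum_(x : {ffun 'I_d -> {ffun 'I_K -> bool}})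
     dirichlet R w M g x * psum a (fun _ => 2 ^ K)%N (dyadv_of_bits x).
Proof.
move=> gt0_d gt0_M le_wK le_M; pose l0 := Ordinal gt0_d.
have gt0_max (N : 'I_d -> nat) : (0 < N l0)%N -> (0 < \max_(l < d) N l)%N.
  by move=> gt0_N; apply: leq_trans gt0_N (leq_bigmax l0).
rewrite (psumE (B := 2 ^ K)) ?gt0_max ?muln_gt0 ?expn_gt0 ?gt0_M //.
under [RHS]eq_bigr do rewrite (psumE (B := 2 ^ K)) ?gt0_max ?expn_gt0 // mulr_sumr.
rewrite exchange_big /=.
under [RHS]eq_bigr => n _.
  under eq_bigr do rewrite mulrCA.
  rewrite -mulr_sumr dirichlet_walshv //.
  over.
rewrite [RHS](eq_bigl xpredT) => [|n]; last by apply/forallP => l; apply: ltn_ord.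
rewrite big_mkcond; apply: eq_bigr => n _.
by case: ifP; rewrite (mul1r, mul0r) ?mulr0.
Qed.

Lemma psum_pow2_eq0_in_null_cube (R : realType) (d w K : nat) (a : ('I_d -> nat) -> R)
    (h x : dyadv d) :
  (w <= K)%N -> tau_null_cube a w h -> cube w h x -> psum a (fun _ => 2 ^ K)%N x = 0.
Proof.
move=> le_wK null_h hx.
have : tau a K x = 0.
  apply: null_h => y xy l t lt_t.
  by rewrite (xy l t (leq_trans lt_t le_wK)) hx.
by move/eqP; rewrite /tau mulf_eq0 invr_eq0 pnatr_eq0 expn_eq0 /= => /eqP.
Qed.

Lemma psum_eq0_of_null_cube (R : realType) (d w : nat) (a : ('I_d -> nat) -> R)
    (g h : dyadv d) :
  (0 < d)%N -> cube w h g -> tau_null_cube a w h ->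
  forall M : 'I_d -> nat, (forall l, 0 < M l)%N -> psum a (fun l => 2 ^ w * M l)%N g = 0.
Proof.
move=> gt0_d hg null_h M gt0_M.
pose K := (w + \max_(l < d) M l)%N.
have le_wK : (w <= K)%N by rewrite leq_addr.
have le_M l : (2 ^ w * M l <= 2 ^ K)%N.
  rewrite expnD leq_pmul2l ?expn_gt0 // (leq_trans (ltnW (ltn_expl _ (ltnSn 1)))) //.
  by rewrite leq_exp2l ?leq_bigmax.
rewrite (psum_dirichlet_average _ _ gt0_d gt0_M le_wK le_M); apply: big1 => x _.
have [agree | /forallPn [l /forallPn [t ne_t]]] :=
  boolP [forall l, [forall t : 'I_w, dyadv_of_bits x l t == g l t]].
  rewrite (psum_pow2_eq0_in_null_cube le_wK null_h) ?mulr0 // => l t lt_t.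
  by rewrite -(hg l t lt_t); apply/eqP/(forallP (forallP agree l) (Ordinal lt_t)).
by rewrite (dirichlet_eq0 _ _ le_wK ne_t) mul0r.
Qed.

Theorem proposition4 (R : realType) (d : nat) (hd : (2 <= d)%N)
    (a : ('I_d -> nat) -> R) (g : dyadv d) :
  ~ in_supp a g ->
  (exists w : nat, forall M : 'I_d -> nat, (forall l, (0 < M l)%N) ->
       psum a (fun l => 2 ^ w * M l)%N g = 0)
  /\
  (forall w : nat, null_rank a g w -> (forall k, null_rank a g k -> (w <= k)%N) ->
     forall M : 'I_d -> nat, (forall l, (0 < M l)%N) ->
       psum a (fun l => 2 ^ w * M l)%N g = 0).
Proof.
move=> not_supp; have gt0_d : (0 < d)%N by apply: leq_trans hd.
split=> [|w [h [hg null_h]] _]; last exact: psum_eq0_of_null_cube gt0_d hg null_h.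
have [w [h [hg null_h]]] := NNPP _ not_supp.
by exists w; apply: psum_eq0_of_null_cube gt0_d hg null_h.
Qed.
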